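(* For every $k,m,r\in\mathbb{N}$ there is $n\in\mathbb{N}$ such that for every $c:M^{\mathrm{ba}}_{n,k}\to r$ there is $R\in M^{\mathrm{oba}}_{n,m}$ such that the color $c(R\cdot B)$ depends only on $\pi(B)$ for $B\in M^{\mathrm{ba}}_{m,k}$; that is, there is $\widehat{c}:\mathcal{S}_k\to r$ with $c(R\cdot B)=\widehat{c}(\pi(B))$ for every $B\in M^{\mathrm{ba}}_{m,k}$.
   Context: $r$ is identified with $\{0,\dots,r-1\}$. $M^{\mathrm{ba}}_{n,k}$ (Boolean matrices) is the set of $n\times k$ matrices with entries in $\{0,1\}$ whose columns, viewed as subsets $P_0,\dots,P_{k-1}$ of $\{0,\dots,n-1\}$, form a partition of $\{0,\dots,n-1\}$ into $k$ (nonempty) pieces. $M^{\mathrm{oba}}_{n,k}$ is the set of those in $M^{\mathrm{ba}}_{n,k}$ with $\min P_i<\min P_{i+1}$ for all $i<k-1$. $\mathcal{S}_k$ is the group of permutations of $k$, identified with $k\times k$ permutation matrices, and $\pi:M^{\mathrm{ba}}_{n,k}\to\mathcal{S}_k$ assigns to $A$ the unique $\pi(A)\in\mathcal{S}_k$ with $A\cdot\pi(A)\in M^{\mathrm{oba}}_{n,k}$. *)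

From mathcomp Require Import all_boot all_order all_algebra all_fingroup.
Set Implicit Arguments. Unset Strict Implicit. Unset Printing Implicit Defensive.
Import GRing.Theory.

(* Boolean matrices are represented as matrices over nat with entries in {0,1};
   products R *m B are ordinary (semiring nat) matrix products. *)

(* A \in M^ba_{n,k}: 0/1 entries, each row has exactly one 1 (columns are
   pairwise disjoint and cover {0..n-1}), and every column is nonempty. *)
Definition is_ba (n k : nat) (A : 'M[nat]_(n, k)) : bool :=
  [forall i, forall j, A i j <= 1]%N &&
  [forall i : 'I_n, #|[set j : 'I_k | A i j == 1%N]| == 1%N] &&
  [forall j : 'I_k, exists i : 'I_n, A i j == 1%N].

(* min P_j (the default n is only used for empty columns) *)
Definition minrow (n k : nat) (A : 'M[nat]_(n, k)) (j : 'I_k) : nat :=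
  \big[minn/n]_(i : 'I_n | A i j == 1%N) (i : nat).

Definition is_oba (n k : nat) (A : 'M[nat]_(n, k)) : bool :=
  is_ba A &&
  [forall j : 'I_k, forall j' : 'I_k,
     (nat_of_ord j' == (nat_of_ord j).+1) ==> (minrow A j < minrow A j')%N].

(* pi(A): the (unique, for A in M^ba) permutation s with A *m perm_mx s in M^oba *)
Definition piM (n k : nat) (A : 'M[nat]_(n, k)) : {perm 'I_k} :=
  odflt 1%g [pick s : {perm 'I_k} | is_oba (A *m perm_mx s)].

From Stdlib Require Import ClassicalEpsilon.
From mathcomp Require Import all_boot all_order all_algebra all_fingroup.
From mathcomp Require Import zify.
Set Implicit Arguments. Unset Strict Implicit. Unset Printing Implicit Defensive.

(* Reading row [i] of a matrix of M^ba as the index of the column holding its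
   1, a matrix of M^oba is a word over {0, ..., k-1} in which every letter
   occurs and first occurrences come in increasing order: a Graham-Rothschild
   parameter word with k variables over the empty alphabet, and R *m B is
   composition of words.  Every B in M^ba is such a word followed by the column
   permutation pi(B)^-1, so colouring an ordered word w by the function
   s |-> c (w *m s) reduces the theorem to the Graham-Rothschild theorem.

   That theorem is proved by induction on k, for all alphabets at once.  For
   k = 0 it is a product form of the Hales-Jewett theorem, itself proved by
   colour focusing.  For k + 1, one first makes the colour of F g depend only on
   the constant prefix of g before its first variable (one position at a time,
   applying the case k over a larger alphabet in which the prefix letters are
   constants), and then makes the colour of that prefix constant: by the case
   k = 0 the colour of the prefix before the p-th variable depends only on p,
   and by pigeonhole one places the variables at positions p of one colour. *)

Lemma index_first (T : eqType) (x0 x : T) s i : i < size s -> nth x0 s i = x ->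
  (forall i', i' < i -> nth x0 s i' != x) -> index x s = i.
Proof.
move=> lt_i_s nth_i before_i; apply/eqP; rewrite eqn_leq -{1}nth_i index_nth //=.
rewrite leqNgt; apply/negP => /before_i; rewrite nth_index ?eqxx //.
by rewrite -nth_i mem_nth.
Qed.

Lemma nth_before_index (T : eqType) (x0 x : T) s i : i < index x s -> nth x0 s i != x.
Proof. by move/(before_find x0) => /= ->. Qed.

Lemma index_iota_add a M j : j < M -> index (a + j) (iota a M) = j.
Proof.
move=> jM; apply: (@index_first _ 0); first by rewrite size_iota.
  by rewrite nth_iota.
by move=> i ij; rewrite nth_iota; [apply/eqP; lia | lia].
Qed.

Lemma index_drop (T : eqType) (x : T) s n : n <= index x s ->
  index x (drop n s) = index x s - n.
Proof.
elim: n s => [|n IH] [|y s] //=; first by rewrite subn0.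
by case: ifP => // _ H; rewrite IH.
Qed.

(** * Parameter words *)

(* The letters [x < a] are constants and the letter [a + j] is the [j]-th
   variable; [wcomp a f g] substitutes the word [g] for the variables of [f]. *)
Definition wcomp (a : nat) (f g : seq nat) : seq nat :=
  map (fun x => if x < a then x else nth 0 g (x - a)) f.

Definition pword (a n k : nat) (w : seq nat) : Prop :=
  [/\ size w = n, {in w, forall x, x < a + k},
      (forall j, j < k -> a + j \in w) &
      (forall j j', j < j' -> j' < k -> index (a + j) w < index (a + j') w)].

Definition shift_vars (a p : nat) (w : seq nat) : seq nat :=
  map (fun x => if x < a then x else x + p) w.

Definition prefix_before (T : eqType) (x : T) (s : seq T) : seq T := take (index x s) s.

Lemma prefix_before_rcons (T : eqType) (x y : T) s : x \in s ->
  prefix_before x (rcons s y) = prefix_before x s.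
Proof. by move=> xs; rewrite /prefix_before -cats1 index_cat xs takel_cat // index_size. Qed.

Lemma prefix_before_rcons_notin (T : eqType) (x : T) s : x \notin s ->
  prefix_before x (rcons s x) = s.
Proof.
by move=> xs; rewrite /prefix_before -cats1 index_cat (negbTE xs) /= eqxx addn0 take_size_cat.
Qed.

Section Words.
Variable a : nat.
Implicit Types f g h u v w : seq nat.

Lemma pword_size n k w : pword a n k w -> size w = n.
Proof. by case. Qed.

Lemma index_wcomp n m k f g j : pword a n m f -> pword a m k g -> j < k ->
  index (a + j) (wcomp a f g) = index (a + index (a + j) g) f.
Proof.
case=> sf lf vf ordf [sg lg vg ordg] jk.
have i0m : index (a + j) g < m by rewrite -sg index_mem vg.
have qn : index (a + index (a + j) g) f < size f by rewrite index_mem vf.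
apply: (@index_first _ 0); first by rewrite size_map.
  rewrite (nth_map 0) // nth_index ?vf // ifF; last by lia.
  by rewrite addKn nth_index // vg.
move=> q q_lt; have qf : q < size f by apply: ltn_trans qn.
rewrite (nth_map 0) //; have := lf _ (mem_nth 0 qf).
have y_neq := nth_before_index 0 q_lt; set y := nth 0 f q in y_neq * => ly.
case: ifP => [ya | /negbT]; first by apply/eqP; lia.
rewrite -leqNgt => ay; apply/negP => /eqP gy.
have yy : y = a + (y - a) by lia.
have le_i0 : index (a + j) g <= y - a by rewrite -gy index_nth // sg; lia.
have lt_i0 : index (a + j) g < y - a.
  by rewrite ltn_neqAle le_i0 andbT; apply: contraNneq y_neq => ->; rewrite -yy.
have := ordf _ _ lt_i0 ltac:(lia).
have : index (a + (y - a)) f <= q by rewrite -yy /y index_nth.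
lia.
Qed.

Lemma pword_wcomp n m k f g : pword a n m f -> pword a m k g -> pword a n k (wcomp a f g).
Proof.
move=> pf pg; have [sf lf vf ordf] := pf; have [sg lg vg ordg] := pg.
split.
- by rewrite size_map.
- move=> _ /mapP [y yf ->]; case: ifP => ya; first by lia.
  by apply: lg; apply: mem_nth; rewrite sg; have := lf _ yf; lia.
- move=> j jk; rewrite -index_mem (index_wcomp pf pg jk) size_map index_mem.
  by apply: vf; rewrite -sg index_mem vg.
- move=> j j' jj' j'k; rewrite !(index_wcomp pf pg) //; last by lia.
  by apply: ordf; [exact: ordg | rewrite -sg index_mem vg].
Qed.

Lemma wcompA f g h : {in f, forall x, x < a + size g} ->
  wcomp a (wcomp a f g) h = wcomp a f (wcomp a g h).
Proof.
move=> lf; rewrite /wcomp -map_comp; apply/eq_in_map => x xf /=.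
case xa: (x < a); first by rewrite xa.
by rewrite (nth_map 0) //; have := lf _ xf; lia.
Qed.

Lemma wcomp_cat f1 f2 g : wcomp a (f1 ++ f2) g = wcomp a f1 g ++ wcomp a f2 g.
Proof. exact: map_cat. Qed.

Lemma wcomp_const f g : {in f, forall x, x < a} -> wcomp a f g = f.
Proof.
by move=> lf; rewrite /wcomp -[RHS]map_id; apply/eq_in_map => x /lf ->.
Qed.

Lemma wcomp_bounded b f g : a <= b -> 0 < b -> {in g, forall x, x < b} ->
  {in wcomp a f g, forall x, x < b}.
Proof.
move=> ab b0 lg _ /mapP [y _ ->]; case: ifP => ya; first by lia.
case: (ltnP (y - a) (size g)) => yg; first exact/lg/mem_nth.
by rewrite nth_default.
Qed.

Lemma wcomp_take L f g : {in f, forall x, x < a + L} ->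
  wcomp a f (take L g) = wcomp a f g.
Proof.
move=> lf; apply/eq_in_map => x xf; case: ifP => // xa.
by rewrite nth_take //; have := lf _ xf; lia.
Qed.

Lemma wcomp_iota n g : n <= size g -> wcomp a (iota a n) g = take n g.
Proof.
move=> ng; apply: (@eq_from_nth _ 0); first by rewrite size_map size_iota size_takel.
move=> i; rewrite size_map size_iota => i_n.
by rewrite (nth_map 0) ?size_iota // nth_iota // nth_take // ltnNge leq_addr addKn.
Qed.

Lemma wcomp_shift_vars p w g : wcomp (a + p) (shift_vars a p w) g = wcomp a w g.
Proof.
rewrite /wcomp -map_comp; apply/eq_map => x /=.
case xa: (x < a); first by rewrite ltn_addr ?xa.
by rewrite ltn_add2r xa subnDr.
Qed.

Lemma wcomp_shift_vars_drop p w g :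
  wcomp a (shift_vars a p w) g = wcomp a w (drop p g).
Proof.
rewrite /wcomp -map_comp; apply/eq_map => x /=.
case xa: (x < a); first by rewrite xa.
by rewrite ifF ?nth_drop; [congr nth | ]; lia.
Qed.

Lemma pword_iota M : pword a M M (iota a M).
Proof.
split.
- by rewrite size_iota.
- by move=> x; rewrite mem_iota => /andP [].
- by move=> j jM; rewrite mem_iota; lia.
- by move=> j j' jj' j'M; rewrite !index_iota_add //; lia.
Qed.

Lemma pword_cat_const n k c w : {in c, forall x, x < a} -> pword a n k w ->
  pword a (size c + n) k (c ++ w).
Proof.
move=> lc [sw lw vw ordw].
have vc t : a + t \notin c by apply/negP => /lc; lia.
split.
- by rewrite size_cat sw.
- by move=> x; rewrite mem_cat => /orP [/lc | /lw]; lia.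
- by move=> j jk; rewrite mem_cat vw ?orbT.
- by move=> j j' jj' j'k; rewrite !index_cat !(negbTE (vc _)) ltn_add2l; apply: ordw.
Qed.

Lemma pword_cat_tail n1 n2 k u v : pword a n1 k u -> size v = n2 ->
  {in v, forall x, x < a + k} -> pword a (n1 + n2) k (u ++ v).
Proof.
case=> su lu vu ordu sv lv; split.
- by rewrite size_cat su sv.
- by move=> x; rewrite mem_cat => /orP [/lu | /lv].
- by move=> j jk; rewrite mem_cat vu.
- by move=> j j' jj' j'k; rewrite !index_cat !vu //; [exact: ordu | lia].
Qed.

Lemma pword_rcons n m w : pword a n m w -> pword a n.+1 m.+1 (rcons w (a + m)).
Proof.
move=> [sw lw vw ordw]; have vm : a + m \notin w by apply/negP => /lw; lia.
split.
- by rewrite size_rcons sw.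
- by move=> x; rewrite mem_rcons inE => /orP [/eqP -> | /lw]; lia.
- move=> j; rewrite ltnS leq_eqVlt mem_rcons inE => /orP [/eqP -> | jm].
    by rewrite eqxx.
  by rewrite vw ?orbT.
- move=> j j' jj'; rewrite ltnS leq_eqVlt -!cats1 => /orP [/eqP E | j'm].
    subst j'; rewrite !index_cat (negbTE vm) vw; last by lia.
    by rewrite /= eqxx addn0 index_mem vw //; lia.
  by rewrite !index_cat !vw //; [apply: ordw | lia].
Qed.

Lemma pword_shift_vars p n k w : pword a n k w -> pword (a + p) n k (shift_vars a p w).
Proof.
case=> sw lw vw ordw.
have shift_inj : injective (fun x => if x < a then x else x + p).
  by move=> x y /=; case: ifP; case: ifP; lia.
have shift_var j : a + p + j = (if a + j < a then a + j else a + j + p) by rewrite ifF; lia.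
split.
- by rewrite size_map.
- by move=> _ /mapP [x /lw xw ->]; case: ifP; lia.
- by move=> j jk; rewrite shift_var; apply: map_f; apply: vw.
- by move=> j j' jj' j'k; rewrite !shift_var !index_map //; apply: ordw.
Qed.

Lemma letters_before_var n k w j : pword a n k w -> j < k ->
  {in prefix_before (a + j) w, forall x, x < a + j}.
Proof.
move=> [sw lw vw ordw] jk x /(nthP 0) [i]; rewrite size_takel ?index_size // => ij.
have jw : index (a + j) w < size w by rewrite index_mem vw.
rewrite nth_take // => wi.
have xw : x \in w by rewrite -wi mem_nth //; apply: ltn_trans jw.
have xk := lw _ xw; rewrite ltnNge; apply/negP => jx.
have x_neq := nth_before_index 0 ij; rewrite wi in x_neq.
have xx : x = a + (x - a) by lia.
case: (ltngtP j (x - a)) => jx'.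
- have := ordw _ _ jx' ltac:(lia).
  have : index x w <= i by rewrite -wi index_nth //; apply: ltn_trans jw.
  rewrite -xx; lia.
- lia.
- by move: x_neq; rewrite {1}xx -jx' eqxx.
Qed.

Lemma pword_const n w : size w = n -> {in w, forall x, x < a} -> pword a n 0 w.
Proof. by move=> sw lw; split=> // x /lw; rewrite addn0. Qed.

Lemma pword_cat_shift n1 n2 m F L : pword a n1 m F -> pword a n2 1 L ->
  pword a (n1 + n2) m.+1 (F ++ shift_vars a m L).
Proof.
move=> [sF lF vF ordF] [sL lL vL _]; split.
- by rewrite size_cat size_map sF sL.
- move=> x; rewrite mem_cat => /orP [/lF | /mapP [y /lL yL ->]]; first lia.
  by case: ifP; lia.
- move=> j; rewrite ltnS leq_eqVlt mem_cat => /orP [/eqP -> | jm]; last by rewrite vF.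
  apply/orP; right; apply/mapP; exists a; last by rewrite ltnn.
  by have := vL 0 isT; rewrite addn0.
- move=> j j' jj'; rewrite ltnS leq_eqVlt => /orP [/eqP E | j'm]; last first.
    by rewrite !index_cat !vF //; [apply: ordF | lia].
  subst j'; have vm : (a + m \in F) = false by apply/negP => /lF; lia.
  by rewrite !index_cat vF ?vm //; apply: ltn_addr; rewrite index_mem vF.
Qed.

Lemma prefix_before_wcomp n m k E G p : pword a n m E -> pword a m k G -> p < k ->
  prefix_before (a + p) (wcomp a E G) =
    wcomp a (prefix_before (a + size (prefix_before (a + p) G)) E) (prefix_before (a + p) G).
Proof.
move=> pE pG pk; have [sG _ vG _] := pG.
have qm : index (a + p) G < m by rewrite -sG index_mem vG.
rewrite [size _]size_takel ?index_size // /prefix_before (index_wcomp pE pG pk).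
rewrite -[take _ (wcomp a E G)]map_take wcomp_take //.
exact: letters_before_var pE qm.
Qed.

End Words.

(** * The Hales-Jewett theorem *)

Definition word_of_ffun N b (f : {ffun 'I_N -> 'I_b.+1}) : seq nat :=
  [seq (f i : nat) | i <- enum 'I_N].

Definition ffun_of_word N b (w : seq nat) : {ffun 'I_N -> 'I_b.+1} :=
  [ffun i : 'I_N => inord (nth 0 w i)].

Lemma ffun_of_wordK N b w : size w = N -> {in w, forall x, x <= b} ->
  word_of_ffun (ffun_of_word N b w) = w.
Proof.
move=> sw lw; rewrite /word_of_ffun.
have -> : [seq (ffun_of_word N b w i : nat) | i <- enum 'I_N] =
          [seq nth 0 w (val i) | i <- enum 'I_N].
  apply/eq_in_map => i _; rewrite ffunE inordK // ltnS.
  by apply: lw; apply: mem_nth; rewrite sw.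
by rewrite (map_comp (nth 0 w) val) val_enum_ord -sw map_nth_iota0 // take_size.
Qed.

Definition suffix_colouring (T : finType) N b (chi : seq nat -> T) (x : seq nat) :
  {ffun {ffun 'I_N -> 'I_b.+1} -> T} := [ffun f => chi (x ++ word_of_ffun f)].

Lemma suffix_colouringP (T : finType) N b (chi : seq nat -> T) x x' y :
  suffix_colouring N b chi x = suffix_colouring N b chi x' ->
  size y = N -> {in y, forall z, z <= b} -> chi (x ++ y) = chi (x' ++ y).
Proof.
move=> E sy ly.
have := congr1 (fun F : {ffun _ -> T} => F (ffun_of_word N b y)) E.
by rewrite !ffunE ffun_of_wordK.
Qed.

Definition monochromatic_line (T : Type) a N (chi : seq nat -> T) :=
  exists2 L, pword a N 1 L & forall x y, x < a -> y < a ->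
    chi (wcomp a L [:: x]) = chi (wcomp a L [:: y]).

Definition hales_jewett a :=
  forall T : finType, exists N, forall chi : seq nat -> T, monochromatic_line a N chi.

(* [f] is the focus: the common instance of the lines at the extra letter [a]. *)
Definition focused (T : Type) a N (chi : seq nat -> T) s f Ls (cs : nat -> T) :=
  [/\ size f = N, {in f, forall x, x < a.+1},
      forall i, i < s -> [/\ pword a.+1 N 1 (Ls i), wcomp a.+1 (Ls i) [:: a] = f &
        forall x, x < a -> chi (wcomp a.+1 (Ls i) [:: x]) = cs i] &
      forall i j, i < s -> j < s -> cs i = cs j -> i = j].

Definition colour_focusing (T : Type) a N s := forall chi : seq nat -> T,
  monochromatic_line a.+1 N chi \/ exists f Ls cs, focused a N chi s f Ls cs.

Lemma hales_jewett1 : hales_jewett 1.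
Proof.
move=> T; exists 1 => chi; exists [:: 1]; last by case=> [|//] [|//].
split=> // [x | [|//] | ]; rewrite ?inE; [by move=> /eqP -> | done | lia].
Qed.

Lemma hales_jewett_prefix a (T : finType) N2 : 0 < a -> hales_jewett a ->
  exists N1, forall chi : seq nat -> T, exists2 l, pword a N1 1 l &
    forall x y, x < a -> size y = N2 -> {in y, forall z, z <= a} ->
      chi (wcomp a l [:: x] ++ y) = chi (wcomp a l [:: 0] ++ y).
Proof.
move=> a0 /(_ {ffun {ffun 'I_N2 -> 'I_a.+1} -> T}) [N1 hjN].
exists N1 => chi; have [l pl Hl] := hjN (suffix_colouring N2 a chi).
by exists l => // x y xa sy ly; apply: (@suffix_colouringP _ N2 a) => //; apply: Hl.
Qed.

Section FocusingStep.
Variables (T : eqType) (a N1 N2 s : nat) (chi : seq nat -> T) (l : seq nat).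
Hypotheses (a0 : 0 < a) (pl : pword a N1 1 l).
Hypothesis line_l : forall x y, x < a -> size y = N2 -> {in y, forall z, z <= a} ->
  chi (wcomp a l [:: x] ++ y) = chi (wcomp a l [:: 0] ++ y).

Let l0 := wcomp a l [:: 0].
Let chi0 y := chi (l0 ++ y).

Let l0_const : {in l0, forall x, x < a}.
Proof. by apply: wcomp_bounded => // z; rewrite inE => /eqP ->. Qed.

Let wcomp_l0 Y x : wcomp a.+1 (l0 ++ Y) [:: x] = l0 ++ wcomp a.+1 Y [:: x].
Proof. by rewrite wcomp_cat wcomp_const // => z /l0_const; lia. Qed.

Let pword_l0 Y : pword a.+1 N2 1 Y -> pword a.+1 (N1 + N2) 1 (l0 ++ Y).
Proof.
have <- : size l0 = N1 by rewrite size_map (pword_size pl).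
by apply: pword_cat_const => z /l0_const; lia.
Qed.

Lemma monochromatic_line_prefix :
  monochromatic_line a.+1 N2 chi0 -> monochromatic_line a.+1 (N1 + N2) chi.
Proof.
case=> L pL HL; exists (l0 ++ L); first exact: pword_l0.
by move=> x y xa ya; rewrite !wcomp_l0; apply: HL.
Qed.

Lemma focused_old_colour f Ls cs i : focused a N2 chi0 s f Ls cs -> i < s ->
  cs i = chi0 f -> monochromatic_line a.+1 (N1 + N2) chi.
Proof.
case=> _ _ HLs _ i_s ci; have [pLi fLi cLi] := HLs i i_s.
suff colour x : x < a.+1 -> chi (wcomp a.+1 (l0 ++ Ls i) [:: x]) = cs i.
  by exists (l0 ++ Ls i) => [|x y xa ya]; [exact: pword_l0 | rewrite !colour].
rewrite ltnS leq_eqVlt wcomp_l0 => /orP [/eqP -> | xa]; first by rewrite fLi ci.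
exact: cLi.
Qed.

Lemma focused_new_colour f Ls cs : focused a N2 chi0 s f Ls cs ->
  (forall i, i < s -> cs i != chi0 f) ->
  focused a (N1 + N2) chi s.+1 (wcomp a l [:: a] ++ f)
    (fun i => shift_vars a 1 l ++ if i < s then Ls i else f)
    (fun i => if i < s then cs i else chi0 f).
Proof.
case=> sf lf HLs inj new.
have pl' := pword_shift_vars 1 pl; rewrite addn1 in pl'.
have wcomp_l' Z x :
    wcomp a.+1 (shift_vars a 1 l ++ Z) [:: x] = wcomp a l [:: x] ++ wcomp a.+1 Z [:: x].
  by rewrite wcomp_cat -addn1 wcomp_shift_vars.
have line_l' Z x : x < a -> pword a.+1 N2 1 Z ->
    chi (wcomp a.+1 (shift_vars a 1 l ++ Z) [:: x]) = chi0 (wcomp a.+1 Z [:: x]).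
  move=> xa pZ; rewrite wcomp_l' line_l //; first by rewrite size_map (pword_size pZ).
  move=> z zZ; rewrite -ltnS; apply: (wcomp_bounded _ _ _ zZ) => // y.
  rewrite inE => /eqP ->; lia.
split.
- by rewrite size_cat size_map (pword_size pl) sf.
- move=> x; rewrite mem_cat => /orP [|/lf //].
  by apply: (wcomp_bounded (b := a.+1)) => // z; rewrite inE => /eqP ->.
- move=> i; rewrite ltnS leq_eqVlt => /orP [/eqP -> | i_s]; rewrite ?ltnn ?i_s.
    have fc : wcomp a.+1 f [:: a] = f by apply: wcomp_const => z /lf.
    split; first by apply: pword_cat_tail pl' sf _ => z /lf; lia.
      by rewrite wcomp_l' fc.
    move=> x xa; rewrite wcomp_l' line_l // (wcomp_const _ lf) //; lia.
  have [pLi fLi cLi] := HLs i i_s.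
  have [_ lLi _ _] := pLi.
  split; first exact: pword_cat_tail pl' (pword_size pLi) lLi.
    by rewrite wcomp_l' fLi.
  by move=> x xa; rewrite line_l' ?cLi.
- move=> i j; rewrite !ltnS => i_s j_s.
  case: (ltnP i s) => [ilt | ige]; case: (ltnP j s) => [jlt | jge].
  + exact: inj.
  + by move=> E; have := new i ilt; rewrite E eqxx.
  + by move=> E; have := new j jlt; rewrite E eqxx.
  + lia.
Qed.

End FocusingStep.

Lemma colour_focusing0 (T : Type) a : colour_focusing T a 0 0.
Proof. by move=> chi; right; exists [::], (fun _ => [::]), (fun _ => chi [::]). Qed.

Lemma colour_focusingS (T : finType) a N2 s : 0 < a -> hales_jewett a ->
  colour_focusing T a N2 s -> exists N, colour_focusing T a N s.+1.
Proof.
move=> a0 hj foc; have [N1 hjN] := hales_jewett_prefix T N2 a0 hj.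
exists (N1 + N2) => chi; have [l pl line_l] := hjN chi.
case: (foc (fun y => chi (wcomp a l [:: 0] ++ y))) => [mono | [f [Ls [cs focus]]]].
  by left; apply: (monochromatic_line_prefix a0 pl mono).
have [/existsP [i /eqP ci] | /existsPn new] :=
  boolP [exists i : 'I_s, cs i == chi (wcomp a l [:: 0] ++ f)].
  by left; apply: (focused_old_colour a0 pl focus (ltn_ord i) ci).
right; do 3 eexists; apply: (focused_new_colour a0 pl line_l focus) => i i_s.
exact: new (Ordinal i_s).
Qed.

Lemma hales_jewettS a : 0 < a -> hales_jewett a -> hales_jewett a.+1.
Proof.
move=> a0 hj T.
have [N foc] : exists N, colour_focusing T a N #|T|.+1.
  elim: #|T|.+1 => [|s [N IH]]; first by exists 0; apply: colour_focusing0.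
  exact: colour_focusingS IH.
exists N => chi; case: (foc chi) => // [[f [Ls [cs [_ _ _ inj]]]]].
have cs_inj : injective (fun i : 'I_#|T|.+1 => cs i) by move=> i j /inj/val_inj; apply.
by have := leq_card _ cs_inj; rewrite card_ord ltnn.
Qed.

Lemma hales_jewett_all a : 0 < a -> hales_jewett a.
Proof.
elim: a => // [[_ _ | a IH _]]; first exact: hales_jewett1.
exact: hales_jewettS (IH _).
Qed.

(** * The Graham-Rothschild theorem *)

Definition graham_rothschild k := forall (a m : nat) (T : finType), exists n,
  forall chi : seq nat -> T, exists2 F, pword a n m F &
    forall g g', pword a m k g -> pword a m k g' -> chi (wcomp a F g) = chi (wcomp a F g').

Lemma graham_rothschild0 : graham_rothschild 0.
Proof.
move=> a; have [-> m T | a0] := posnP a.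
  have nil g : pword 0 m 0 g -> g = [::] by case: g => // x g [_ /(_ x (mem_head _ _))].
  by exists m => chi; exists (iota 0 m) => [|g g' /nil -> /nil ->]; first exact: pword_iota.
elim=> [|m IH] T.
  exists 0 => chi; exists [::] => [|g g' /pword_size/size0nil -> /pword_size/size0nil -> //].
  exact: (pword_iota a 0).
have [N2 hjN] := hales_jewett_all a0 T.
have [N1 IHN] := IH {ffun {ffun 'I_N2 -> 'I_a.+1} -> T}.
exists (N1 + N2) => chi; have [F pF HF] := IHN (suffix_colouring N2 a chi).
have [L pL HL] := hjN (fun y => chi (wcomp a F (nseq m 0) ++ y)).
exists (F ++ shift_vars a m L); first exact: pword_cat_shift.
suff colour g : pword a m.+1 0 g ->
    chi (wcomp a (F ++ shift_vars a m L) g) = chi (wcomp a F (nseq m 0) ++ wcomp a L [:: 0]).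
  by move=> g g' /colour -> /colour ->.
case=> sg lg _ _; have [_ lF _ _] := pF.
have ga : nth 0 g m < a by rewrite -[a]addn0 lg ?mem_nth ?sg.
rewrite wcomp_cat wcomp_shift_vars_drop (drop_nth 0) ?sg // drop_oversize ?sg //.
rewrite -[wcomp a F g](wcomp_take (L := m)) //.
transitivity (chi (wcomp a F (nseq m 0) ++ wcomp a L [:: nth 0 g m]));
  last exact: (HL _ _ ga a0).
apply: (@suffix_colouringP _ N2 a).
- apply: HF; apply: pword_const; rewrite ?size_take ?size_nseq ?sg ?ltnSn //.
    by move=> x /mem_take /lg; rewrite addn0.
  by move=> x; rewrite mem_nseq => /andP [_ /eqP ->].
- by rewrite size_map (pword_size pL).
- move=> x xL; rewrite -ltnS; apply: (wcomp_bounded _ _ _ xL) => // y.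
  by rewrite inE => /eqP ->; apply: ltnW.
Qed.

Definition head_vars (a p : nat) (H : seq nat) : seq nat := iota a p.+1 ++ H.

(* When the first variable of [g] sits at position [p], a word [H] over the
   alphabet [a + p.+1] acts on [g] through the constants [a + i], [i < p],
   standing for the letters of [take p g], and [a + p], standing for that
   variable: [var_tail] recodes the rest of [g] accordingly and
   [prefix_subst] decodes the result. *)
Definition var_tail (a p : nat) (g : seq nat) : seq nat := shift_vars a p (drop p.+1 g).

Definition prefix_subst (a p : nat) (u : seq nat) (x : nat) : nat :=
  if x < a then x else if x < a + p then nth 0 u (x - a) else x - p.

Lemma index_head_vars a p H j : j <= p -> index (a + j) (head_vars a p H) = j.
Proof.
move=> jp; rewrite /head_vars index_cat mem_iota ifT; last by lia.
by rewrite index_iota_add.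
Qed.

Lemma pword_head_vars a p N M H : p < M -> pword (a + p.+1) N (M - p.+1) H ->
  pword a (p.+1 + N) M (head_vars a p H).
Proof.
move=> pM [sH lH vH ordH].
have shift j : p < j -> a + j = a + p.+1 + (j - p.+1) by lia.
have vH' j : p < j -> j < M -> a + j \in H.
  by move=> pj jM; rewrite (shift j pj); apply: vH; lia.
have index_H j : p < j -> j < M -> index (a + j) (head_vars a p H) = p.+1 + index (a + j) H.
  move=> pj jM; rewrite /head_vars index_cat mem_iota ifF; last by lia.
  by rewrite size_iota.
split.
- by rewrite size_cat size_iota sH.
- by move=> x; rewrite mem_cat mem_iota => /orP [|/lH]; lia.
- move=> j jM; rewrite mem_cat mem_iota; case: (leqP j p) => jp.
    by apply/orP; left; lia.
  by rewrite vH' ?orbT.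
- move=> j j' jj' j'M; case: (leqP j' p) => j'p; first by rewrite !index_head_vars //; lia.
  rewrite (index_H j') //; case: (leqP j p) => jp; first by rewrite index_head_vars //; lia.
  rewrite index_H ?ltn_add2l //; last by lia.
  rewrite (shift j jp) (shift j' j'p); apply: ordH; lia.
Qed.

Lemma wcomp_head_vars a p H g : p < size g ->
  wcomp a (head_vars a p H) g = take p.+1 g ++ wcomp a H g.
Proof. by move=> pg; rewrite /head_vars wcomp_cat wcomp_iota. Qed.

Lemma pword_var_tail a M k g : pword a M k.+1 g ->
  pword (a + (index a g).+1) (M - (index a g).+1) k (var_tail a (index a g) g).
Proof.
move=> [sg lg vg ordg].
have after_p j : j < k -> index a g < index (a + j.+1) g.
  by move=> jk; have := ordg 0 j.+1 isT ltac:(lia); rewrite addn0.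
move: (index a g) after_p => p after_p.
have shift_inj : injective (fun x => if x < a then x else x + p).
  by move=> x y /=; case: ifP; case: ifP; lia.
have index_tail j : j < k ->
    index (a + p.+1 + j) (var_tail a p g) = index (a + j.+1) g - p.+1.
  move=> jk; have -> : a + p.+1 + j = (if a + j.+1 < a then a + j.+1 else a + j.+1 + p).
    by rewrite ifF; lia.
  by rewrite /var_tail index_map // index_drop //; apply: after_p.
split.
- by rewrite size_map size_drop sg.
- by move=> _ /mapP [x /mem_drop/lg xk ->]; case: ifP; lia.
- move=> j jk; rewrite -index_mem index_tail // size_map size_drop.
  have : index (a + j.+1) g < size g by rewrite index_mem vg.
  by have := after_p j jk; lia.
- move=> j j' jj' j'k; rewrite !index_tail //; last by lia.
  have := ordg j.+1 j'.+1 ltac:(lia) ltac:(lia).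
  by have := after_p j ltac:(lia); lia.
Qed.

Lemma wcomp_var_tail a M k N p H g : pword a M k.+1 g -> index a g = p ->
  pword (a + p.+1) N (M - p.+1) H ->
  wcomp a H g = map (prefix_subst a p (take p g)) (wcomp (a + p.+1) H (var_tail a p g)).
Proof.
move=> [sg lg vg _] ip [_ lH _ _].
have pM : p < M by rewrite -sg -ip index_mem -[a]addn0 vg.
have gp : nth 0 g p = a by rewrite -ip nth_index // -[a]addn0 vg.
rewrite /wcomp -map_comp; apply/eq_in_map => x /lH xH /=; rewrite /prefix_subst.
case: (ltnP x a) => xa; first by rewrite (ltn_addr _ xa) xa.
case: (ltnP x (a + p.+1)) => xap1; last first.
  have tail_x : x - (a + p.+1) < size (drop p.+1 g) by rewrite size_drop sg; lia.
  rewrite (nth_map 0) // nth_drop.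
  have -> : p.+1 + (x - (a + p.+1)) = x - a by lia.
  case: (ltnP (nth 0 g (x - a)) a) => ya; first by rewrite ya.
  by rewrite ifF ?ifF ?addnK //; lia.
rewrite ltnNge xa /=; case: (ltnP x (a + p)) => xap; first by rewrite nth_take //; lia.
have -> : x = a + p by lia.
by rewrite addKn gp addnK.
Qed.

Lemma wcomp_head_vars_first a M k N p H g : pword a M k.+1 g -> index a g = p ->
  pword (a + p.+1) N (M - p.+1) H ->
  wcomp a (head_vars a p H) g =
    take p g ++ a :: map (prefix_subst a p (take p g)) (wcomp (a + p.+1) H (var_tail a p g)).
Proof.
move=> pg ip pH; have [sg _ vg _] := pg.
have pM : p < size g by rewrite -ip index_mem -[a]addn0 vg.
have gp : nth 0 g p = a by rewrite -ip nth_index // -[a]addn0 vg.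
by rewrite wcomp_head_vars // (take_nth 0) // gp cat_rcons (wcomp_var_tail pg ip pH).
Qed.

Lemma head_vars_first_var a p H g : p < size g -> index a g <= p ->
  index a (wcomp a (head_vars a p H) g) = index a g /\
  prefix_before a (wcomp a (head_vars a p H) g) = prefix_before a g.
Proof.
move=> pg ip; rewrite wcomp_head_vars //.
have ag : a \in take p.+1 g by rewrite in_take_leq // -index_mem; lia.
have iu : index a (take p.+1 g) = index a g.
  by rewrite -[in RHS](cat_take_drop p.+1 g) index_cat ag.
by rewrite /prefix_before !index_cat ag iu takel_cat ?take_takel ?size_takel //; lia.
Qed.

Definition prefix_determined (T : Type) k a (chi : seq nat -> T) F M t :=
  forall g g', pword a M k.+1 g -> pword a M k.+1 g' -> index a g < t ->
    prefix_before a g = prefix_before a g' -> chi (wcomp a F g) = chi (wcomp a F g').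

Lemma prefix_determinedS k a (T : finType) p M' : graham_rothschild k -> p < M' ->
  exists2 M, p < M & forall (chi : seq nat -> T) n F, pword a n M F ->
    prefix_determined k a chi F M p ->
    exists2 F', pword a n M' F' & prefix_determined k a chi F' M' p.+1.
Proof.
move=> IH pM.
have [N HN] := IH (a + p.+1) (M' - p.+1) {ffun {ffun 'I_p -> 'I_a.+1} -> T}.
exists (p.+1 + N) => [|chi n F pF HI]; first lia.
pose psi w : {ffun {ffun 'I_p -> 'I_a.+1} -> T} := [ffun u =>
  chi (wcomp a F (word_of_ffun u ++ a :: map (prefix_subst a p (word_of_ffun u)) w))].
have [H pH HH] := HN psi; have ph := pword_head_vars pM pH.
exists (wcomp a F (head_vars a p H)); first exact: pword_wcomp pF ph.
move=> g g' pg pg' ilt E; have [sg _ vg _] := pg; have [sg' _ _ _] := pg'.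
have ie : index a g = index a g'.
  by move/(congr1 size): E; rewrite !size_takel // index_size.
rewrite !wcompA; try by rewrite (pword_size ph); case: pF.
have [ilt' | ip] : index a g < p \/ index a g = p by lia.
  have [i1 p1] := head_vars_first_var H (ltac:(lia) : p < size g) (ltnW ilt').
  have [i2 p2] :=
    head_vars_first_var H (ltac:(lia) : p < size g') (ltac:(lia) : index a g' <= p).
  by apply: HI; rewrite ?i1 ?p1 ?p2 //; apply: pword_wcomp ph _.
have ip' : index a g' = p by rewrite -ie.
have pg_tail := pword_var_tail pg; have pg'_tail := pword_var_tail pg'.
rewrite ip in pg_tail; rewrite ip' in pg'_tail.
have u_eq : take p g' = take p g by rewrite /prefix_before ip ip' in E.
rewrite (wcomp_head_vars_first pg ip pH) (wcomp_head_vars_first pg' ip' pH) u_eq.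
have := congr1 (fun f : {ffun _ -> T} => f (ffun_of_word p a (take p g)))
  (HH _ _ pg_tail pg'_tail).
have sp : size (take p g) = p by rewrite size_takel //; lia.
have lp : {in take p g, forall x, x <= a}.
  move=> x; have := letters_before_var pg (ltn0Sn k); rewrite addn0 -ip.
  by move=> /(_ x) + xg => /(_ xg); lia.
by rewrite !ffunE ffun_of_wordK.
Qed.

Lemma prefix_determined_all k a (T : finType) t M' : graham_rothschild k -> t <= M' ->
  exists M, forall (chi : seq nat -> T) n F, pword a n M F ->
    exists2 F', pword a n M' F' & prefix_determined k a chi F' M' t.
Proof.
move=> IH; elim: t M' => [|t IHt] M' tM.
  by exists M' => chi n F pF; exists F => // g g' _ _; rewrite ltn0.
have [M1 tM1 step] := prefix_determinedS a T IH tM.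
have [M HM] := IHt M1 (ltnW tM1).
exists M => chi n F pF; have [F1 pF1 I1] := HM chi n F pF.
exact: step pF1 I1.
Qed.

Definition uniform_prefixes (T : Type) a m M := forall col : seq nat -> T,
  exists2 F, pword a M m F & forall p u, p < m -> size u = p -> {in u, forall x, x < a} ->
    col (wcomp a (prefix_before (a + p) F) u) =
    col (wcomp a (prefix_before (a + p) F) (nseq p 0)).

Lemma uniform_prefixesS (T : finType) a m Mm : 0 < a -> uniform_prefixes T a m Mm ->
  exists M, uniform_prefixes T a m.+1 M.
Proof.
move=> a0 IH; have [M HE] := graham_rothschild0 a Mm T.
exists M.+1 => col; have [E pE HEc] := HE col; have [_ lE _ _] := pE.
have [F2 pF2 HF2] := IH (fun s => col (wcomp a (prefix_before (a + size s) E) s)).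
have pEF := pword_wcomp pE pF2; have [_ lEF vEF _] := pEF.
exists (rcons (wcomp a E F2) (a + m)); first exact: pword_rcons.
move=> p u; rewrite ltnS leq_eqVlt => /orP [/eqP -> | pm] su lu.
  rewrite prefix_before_rcons_notin; last by apply/negP => /lEF; lia.
  rewrite !wcompA ?(pword_size pF2) //; apply: HEc; apply: pword_wcomp pF2 _.
    exact: pword_const.
  by apply: pword_const; [rewrite size_nseq | move=> x; rewrite mem_nseq => /andP [_ /eqP ->]].
have [sF2 _ vF2 _] := pF2.
have qm : size (prefix_before (a + p) F2) < Mm.
  by rewrite size_takel ?index_size // -sF2 index_mem vF2.
rewrite prefix_before_rcons ?vEF // (prefix_before_wcomp pE pF2 pm).
have := HF2 p u pm su lu; rewrite /= !size_map.
by rewrite !wcompA //; apply: letters_before_var pE qm.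
Qed.

Lemma uniform_prefixes_exist (T : finType) a m : 0 < a -> exists M, uniform_prefixes T a m M.
Proof.
move=> a0; elim: m => [|m [Mm IH]]; last exact: uniform_prefixesS IH.
by exists 0 => col; exists [::] => [|p u]; [exact: (pword_iota a 0) | rewrite ltn0].
Qed.

Lemma find_first (T : Type) (x0 : T) (P : pred T) s n : n <= size s ->
  (forall t, t < n -> ~~ P (nth x0 s t)) -> (n < size s -> P (nth x0 s n)) -> find P s = n.
Proof.
elim: s n => [|y s IH] [|n] //=; first by move=> _ _ /(_ isT) ->.
move=> ns before_n at_n; have := before_n 0 isT => /= /negbTE ->.
by congr S; apply: IH => // t tn; apply: (before_n t.+1).
Qed.

Lemma find_leq_nth (T : Type) (x0 : T) (P : pred T) s t :
  t < size s -> P (nth x0 s t) -> find P s <= t.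
Proof. by move=> ts Pt; rewrite leqNgt; apply/negP => /(before_find x0); rewrite Pt. Qed.

Lemma sorted_ltn_nth_leq s t t' : sorted ltn s -> t <= t' -> t' < size s ->
  nth 0 s t <= nth 0 s t'.
Proof.
move=> ss; rewrite leq_eqVlt => /orP [/eqP -> // | tt'] t's.
by apply/ltnW/(sorted_ltn_nth ltn_trans) => //; rewrite inE; lia.
Qed.

(* The word of length [L] whose [i]-th variable first occurs at position
   [nth 0 s i] (for [s] increasing), with the constant [0] before [head 0 s]. *)
Definition vars_at a (s : seq nat) L : seq nat :=
  mkseq (fun j => if j < head 0 s then 0 else a + (find (fun x => j < x) s).-1) L.

Lemma index_vars_at a s L i : 0 < a -> sorted ltn s -> {in s, forall x, x < L} ->
  i < size s -> index (a + i) (vars_at a s L) = nth 0 s i.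
Proof.
move=> a0 ss sL iS.
have hd : head 0 s = nth 0 s 0 by case: s ss sL iS.
have siL : nth 0 s i < L by apply/sL/mem_nth.
apply: (@index_first _ 0); first by rewrite size_mkseq.
  rewrite nth_mkseq // hd ltnNge sorted_ltn_nth_leq //= (@find_first _ 0 _ _ i.+1) //.
    by move=> t ti; rewrite -leqNgt sorted_ltn_nth_leq //; lia.
  by move=> i_s; apply: (sorted_ltn_nth ltn_trans) => //; rewrite inE.
move=> j ji; rewrite nth_mkseq ?hd; last by lia.
case: ifP => j0; first by apply/eqP; lia.
have : find (fun x => j < x) s <= i by apply: (@find_leq_nth _ 0).
by case: i ji {iS siL} => [|i] ji; [rewrite ji in j0 | move=> fi; apply/eqP; lia].
Qed.

Lemma pword_vars_at a s L : 0 < a -> sorted ltn s -> {in s, forall x, x < L} ->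
  0 < size s -> pword a L (size s) (vars_at a s L).
Proof.
move=> a0 ss sL s0; have idx := index_vars_at a0 ss sL.
split.
- by rewrite size_mkseq.
- move=> _ /mapP [j _ ->]; case: ifP => _; first lia.
  by have := find_size (fun x => j < x) s; lia.
- by move=> j js; rewrite -index_mem idx // size_mkseq; apply/sL/mem_nth.
- move=> j j' jj' j's; rewrite !idx //; last by lia.
  by apply: (sorted_ltn_nth ltn_trans); rewrite ?inE //; lia.
Qed.

Lemma sum_count (T : finType) (kappa : nat -> T) s :
  \sum_(c : T) count (fun p => kappa p == c) s = size s.
Proof.
elim: s => [|x s IH] /=; first by rewrite big1.
rewrite big_split /= IH (bigD1 (kappa x)) //= eqxx big1 // => c cx.
by rewrite eq_sym (negbTE cx).
Qed.

Lemma pigeonhole (T : finType) (kappa : nat -> T) m n : #|T| * m <= n -> 0 < #|T| ->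
  exists c, m <= count (fun p => kappa p == c) (iota 0 n).
Proof.
move=> Tn T0; case: (boolP [exists c, m <= count (fun p => kappa p == c) (iota 0 n)]).
  by move=> /existsP [c Hc]; exists c.
move=> /existsPn small; exfalso; case: m Tn small => [|m] Tn small.
  by have := small (enum_val (Ordinal T0)).
have : \sum_(c : T) count (fun p => kappa p == c) (iota 0 n) <= \sum_(c : T) m.
  by apply: leq_sum => c _; have := small c; rewrite -ltnNge ltnS.
rewrite sum_count size_iota sum_nat_const => le_n.
by have := leq_trans Tn le_n; rewrite leq_pmul2l //; lia.
Qed.

Lemma uniform_first_prefix a k m (T : finType) : exists M, forall col : seq nat -> T,
  exists2 G, pword a M m G & forall g g', pword a m k.+1 g -> pword a m k.+1 g' ->
    col (prefix_before a (wcomp a G g)) = col (prefix_before a (wcomp a G g')).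
Proof.
have [-> | a0] := posnP a.
  have nil w n : pword 0 n k.+1 w -> prefix_before 0 w = [::].
    move=> /letters_before_var /(_ (ltn0Sn k)).
    by case: (prefix_before _ _) => // x s /(_ x (mem_head _ _)).
  exists m => col; exists (iota 0 m) => [|g g' pg pg']; first exact: pword_iota.
  have pI := pword_iota 0 m.
  by rewrite (nil _ _ (pword_wcomp pI pg)) (nil _ _ (pword_wcomp pI pg')).
case: m => [|m].
  exists 0 => col; exists [::] => [|g g' [sg _ vg _]]; first exact: (pword_iota a 0).
  by case: g sg vg => // _ /(_ 0 isT).
pose m2 := #|T| * m.+1.
have [M HC] := uniform_prefixes_exist T m2 a0.
exists M => col; have [F pF HF] := HC col.
have T0 : 0 < #|T| by apply/card_gt0P; exists (col [::]).
pose kappa p := col (wcomp a (prefix_before (a + p) F) (nseq p 0)).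
have [c Hc] := pigeonhole kappa (leqnn m2) T0.
pose s := take m.+1 [seq p <- iota 0 m2 | kappa p == c].
have ss : sorted ltn s by apply/take_sorted/sorted_filter/iota_ltn_sorted; exact: ltn_trans.
have sz : size s = m.+1 by rewrite size_takel // size_filter.
have s_col x : x \in s -> x < m2 /\ kappa x = c.
  by move/mem_take; rewrite mem_filter mem_iota => /andP [/eqP kx /andP [_ xm]].
have pV : pword a m2 m.+1 (vars_at a s m2).
  by rewrite -sz; apply: pword_vars_at => // [x /s_col [] | ]; rewrite ?sz.
exists (wcomp a F (vars_at a s m2)); first exact: pword_wcomp pF pV.
suff first_col g : pword a m.+1 k.+1 g ->
    col (prefix_before a (wcomp a (wcomp a F (vars_at a s m2)) g)) = c.
  by move=> g g' /first_col -> /first_col ->.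
move=> pg; rewrite wcompA; last by rewrite size_mkseq; case: pF.
have py := pword_wcomp pV pg; have [sg _ vg _] := pg.
have im : index a g < size s by rewrite sz -sg index_mem -[a]addn0 vg.
have iy : index a (wcomp a (vars_at a s m2) g) = nth 0 s (index a g).
  have := index_wcomp pV pg (ltn0Sn k); rewrite !addn0 => ->.
  by rewrite index_vars_at // => x /s_col [].
have [_ <-] := s_col _ (mem_nth 0 im).
have := prefix_before_wcomp pF py (ltn0Sn k); rewrite !addn0 => ->.
have sy : size (prefix_before a (wcomp a (vars_at a s m2) g)) = nth 0 s (index a g).
  by rewrite size_takel ?index_size.
rewrite sy; apply: HF; rewrite ?sy //; first by have [] := s_col _ (mem_nth 0 im).
by have := letters_before_var py (ltn0Sn k); rewrite addn0.
Qed.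

Lemma graham_rothschildS k : graham_rothschild k -> graham_rothschild k.+1.
Proof.
move=> IH a m T; have [M2 H2] := uniform_first_prefix a k m T.
have [M1 H1] := prefix_determined_all a T IH (leqnn M2).
exists M1 => chi; have [F1 pF1 I1] := H1 chi M1 (iota a M1) (pword_iota a M1).
(* Any word with first-variable prefix [s] gives the same colour, by [I1]. *)
pose col s := chi (wcomp a F1
  (epsilon (inhabits [::]) (fun g => pword a M2 k.+1 g /\ prefix_before a g = s))).
have colP g : pword a M2 k.+1 g -> chi (wcomp a F1 g) = col (prefix_before a g).
  move=> pg; have [pg0 Eg0] := epsilon_spec (inhabits [::])
    (fun g0 => pword a M2 k.+1 g0 /\ prefix_before a g0 = prefix_before a g)
    (ex_intro _ g (conj pg erefl)).
  have [sg _ vg _] := pg; apply: (I1 _ _ pg pg0 _ (esym Eg0)).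
  by rewrite -sg index_mem -[a]addn0 vg.
have [G pG HG] := H2 col.
exists (wcomp a F1 G) => [|g g' pg pg']; first exact: pword_wcomp pF1 pG.
have lF1 : {in F1, forall x, x < a + size G} by rewrite (pword_size pG); case: pF1.
have pGg := pword_wcomp pG pg; have pGg' := pword_wcomp pG pg'.
by rewrite !wcompA // !colP //; apply: HG.
Qed.

Lemma graham_rothschild_all k : graham_rothschild k.
Proof. by elim: k => [|k IH]; [exact: graham_rothschild0 | exact: graham_rothschildS]. Qed.

(** * Boolean matrices as parameter words *)

Definition word_mx n k (w : seq nat) : 'M[nat]_(n, k) :=
  \matrix_(i < n, j < k) (nth 0 w i == j : nat).

Lemma word_mxE n k w i j : word_mx n k w i j = (nth 0 w i == j).
Proof. by rewrite mxE. Qed.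

Lemma bigmin_leq (I : eqType) (r : seq I) (P : pred I) (F : I -> nat) x0 i :
  i \in r -> P i -> \big[minn/x0]_(j <- r | P j) F j <= F i.
Proof.
elim: r => // j r IH; rewrite inE big_cons => /orP [/eqP <- | ir] Pi.
  by rewrite Pi geq_minl.
by case: ifP => _; [apply: leq_trans (geq_minr _ _) (IH ir Pi) | exact: IH].
Qed.

Lemma minrow_word_mx n k w (j : 'I_k) : size w = n -> (j : nat) \in w ->
  minrow (word_mx n k w) j = index (j : nat) w.
Proof.
move=> sw jw; have jn : index (j : nat) w < n by rewrite -sw index_mem.
apply/eqP; rewrite eqn_leq; apply/andP; split.
  apply: (bigmin_leq (fun i : 'I_n => i : nat) _ (mem_index_enum (Ordinal jn))).
  by rewrite word_mxE /= nth_index ?eqxx.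
apply: (big_ind (fun x => index (j : nat) w <= x)) => // [|x y hx hy | i]; first exact: ltnW.
  by rewrite leq_min hx hy.
by rewrite word_mxE; case: (nth 0 w i =P j) => [<- _ | //]; rewrite index_nth ?sw.
Qed.

Lemma pword0_oba n k w : pword 0 n k w -> is_oba (word_mx n k w).
Proof.
case=> sw lw vw ordw.
have wk (i : 'I_n) : nth 0 w i < k by apply/lw/mem_nth; rewrite sw.
have jw (j : 'I_k) : (j : nat) \in w by apply: vw.
apply/andP; split; last first.
  apply/forallP => j; apply/forallP => j'; apply/implyP => /eqP jj'.
  rewrite !minrow_word_mx //; have := ordw j j'; rewrite !add0n jj' ltnSn; apply => //.
  by rewrite -jj'.
apply/andP; split; first (apply/andP; split).
- by apply/forallP => i; apply/forallP => j; rewrite word_mxE; case: (_ == _).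
- apply/forallP => i; rewrite (_ : [set j | _] = [set Ordinal (wk i)]) ?cards1 //.
  by apply/setP => j; rewrite !inE word_mxE -val_eqE /= [RHS]eq_sym; case: (nth 0 w i == j).
- apply/forallP => j; have jn : index (j : nat) w < n by rewrite -sw index_mem.
  by apply/existsP; exists (Ordinal jn); rewrite word_mxE /= nth_index ?jw ?eqxx.
Qed.

Lemma mulmx_word_mx n m k f g : size f = n -> {in f, forall x, x < m} ->
  (word_mx n m f *m word_mx m k g)%R = word_mx n k (wcomp 0 f g).
Proof.
move=> sf lf; apply/matrixP => i j; rewrite !mxE.
have fi : nth 0 f i < m by apply/lf/mem_nth; rewrite sf.
rewrite (bigD1 (Ordinal fi)) //= big1 => [|l ne].
  by rewrite GRing.addr0 !word_mxE eqxx GRing.mul1r (nth_map 0) ?sf // subn0.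
rewrite word_mxE; case: (nth 0 f i =P l) => [fil | _]; last by rewrite GRing.mul0r.
by move: ne; rewrite (_ : l = Ordinal fi) ?eqxx //; apply: val_inj.
Qed.

Definition word_of_mx n k (A : 'M[nat]_(n, k)) : seq nat :=
  [seq oapp (@nat_of_ord k) 0 [pick j | A i j == 1%N] | i <- enum 'I_n].

Lemma size_word_of_mx n k (A : 'M[nat]_(n, k)) : size (word_of_mx A) = n.
Proof. by rewrite size_map size_enum_ord. Qed.

Lemma is_ba_row n k (A : 'M[nat]_(n, k)) (i : 'I_n) : is_ba A ->
  exists j0 : 'I_k, nth 0 (word_of_mx A) i = j0 /\ forall j, A i j = (j0 == j).
Proof.
case/andP=> /andP [/forallP le1 /forallP card1] _.
rewrite (nth_map i) ?size_enum_ord // nth_ord_enum; case: pickP => [j0 Aij0 | none].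
  exists j0; split=> // j; case: (eqVneq j0 j) => [<- | ne]; first exact/eqP.
  have /forallP /(_ j) := le1 i; rewrite leq_eqVlt ltnS leqn0 => /orP [Aij | /eqP //].
  have : #|[set j0; j]| <= #|[set j' | A i j' == 1%N]|.
    by apply/subset_leq_card/subsetP => x; rewrite !inE => /orP [] /eqP ->.
  by rewrite (eqP (card1 i)) cards2 ne.
have := card1 i; rewrite (_ : [set j | _] = set0) ?cards0 //.
by apply/setP => j; rewrite !inE none.
Qed.

Lemma is_ba_word_mx n k (A : 'M[nat]_(n, k)) : is_ba A -> A = word_mx n k (word_of_mx A).
Proof.
move=> Aba; apply/matrixP => i j; have [j0 [wi ->]] := is_ba_row i Aba.
by rewrite word_mxE wi.
Qed.

Lemma word_of_mx_bounded n k (A : 'M[nat]_(n, k)) : is_ba A ->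
  {in word_of_mx A, forall x, x < k}.
Proof.
move=> Aba x /(nthP 0) [i]; rewrite size_word_of_mx => i_n <-.
by have [j0 [-> _]] := is_ba_row (Ordinal i_n) Aba.
Qed.

Lemma mem_word_of_mx n k (A : 'M[nat]_(n, k)) (j : 'I_k) : is_ba A ->
  (j : nat) \in word_of_mx A.
Proof.
move=> Aba; have /andP [_ /forallP /(_ j) /existsP [i]] := Aba.
have [j0 [wi ->]] := is_ba_row i Aba; case: (j0 =P j) => [<- _ | //].
by rewrite -wi mem_nth // size_word_of_mx.
Qed.

Lemma is_oba_pword n k (A : 'M[nat]_(n, k)) : is_oba A -> pword 0 n k (word_of_mx A).
Proof.
case/andP=> Aba /forallP ordA.
split=> [|x /(word_of_mx_bounded Aba) | j jk | ]; rewrite ?size_word_of_mx //.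
  exact: (mem_word_of_mx (Ordinal jk) Aba).
have step t : t < k -> t.+1 < k -> index t (word_of_mx A) < index t.+1 (word_of_mx A).
  move=> tk t1k; have := ordA (Ordinal tk).
  move=> /forallP /(_ (Ordinal t1k)) /implyP /(_ (eqxx _)).
  by rewrite {1 2}(is_ba_word_mx Aba) !minrow_word_mx ?size_word_of_mx ?mem_word_of_mx.
move=> j j' jj' j'k; rewrite !add0n.
apply: (homo_ltn_in (D := [pred t | t < k]) (f := index^~ (word_of_mx A))
  (r := fun x y => x < y) ltn_trans) => //; rewrite ?inE; try lia.
by move=> t u _ uk l /andP [_ lu]; rewrite !inE in uk *; lia.
Qed.

Lemma rank_perm k (f : 'I_k -> nat) : injective f ->
  exists s : {perm 'I_k}, forall j j', (s j < s j') = (f j < f j').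
Proof.
move=> f_inj; pose rk j := #|[set j' | f j' < f j]|.
have rk_mono j j' : f j < f j' -> rk j < rk j'.
  move=> lt; apply/proper_card/properP; split.
    by apply/subsetP => x; rewrite !inE => /ltn_trans; apply.
  by exists j; rewrite !inE ?ltnn.
have rk_lt j : rk j < k.
  have : rk j <= #|[set~ j]|.
    by apply/subset_leq_card/subsetP => x; rewrite !inE; apply: contraTneq => ->; rewrite ltnn.
  by rewrite cardsC1 card_ord; have := ltn_ord j; lia.
have rk_inj : injective (fun j => Ordinal (rk_lt j)).
  move=> j j' /(congr1 val) /= E; apply: f_inj.
  by case: (ltngtP (f j) (f j')) => // /rk_mono; rewrite E ltnn.
exists (perm rk_inj) => j j'; rewrite !permE /=.
case: (ltngtP (f j) (f j')) => [/rk_mono // | /rk_mono lt | /f_inj ->]; last by rewrite ltnn.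
by apply/negbTE; rewrite -leqNgt ltnW.
Qed.

Definition relabel k (s : {perm 'I_k}) (x : nat) : nat :=
  if insub x is Some j then val (s j) else x.

Lemma relabel_val k (s : {perm 'I_k}) (j : 'I_k) : relabel s j = s j.
Proof. by rewrite /relabel valK. Qed.

Lemma relabel_inj k (s : {perm 'I_k}) : injective (relabel s).
Proof.
move=> x y; rewrite /relabel.
case: insubP => [j _ <- | xk]; case: insubP => [j' _ <- | yk] //.
- by move/val_inj/perm_inj ->.
- by move=> E; move: yk; rewrite -E ltn_ord.
- by move=> E; move: xk; rewrite E ltn_ord.
Qed.

Lemma mulmx_perm_word_mx n k w (s : {perm 'I_k}) : size w = n -> {in w, forall x, x < k} ->
  (word_mx n k w *m perm_mx s)%R = word_mx n k (map (relabel s) w).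
Proof.
move=> sw wk; apply/matrixP => i j; rewrite -{1}[s]invgK -col_permE mxE !word_mxE.
have iw : i < size w by rewrite sw.
rewrite (nth_map 0) //.
have [j0 ->] : exists j0 : 'I_k, nth 0 w i = j0 by exists (Ordinal (wk _ (mem_nth 0 iw))).
rewrite relabel_val !val_eqE.
by rewrite -[j0 == _](inj_eq (@perm_inj _ s)) permKV.
Qed.

Lemma is_ba_oba_perm m k (B : 'M[nat]_(m, k)) : is_ba B ->
  exists s : {perm 'I_k}, is_oba (B *m perm_mx s)%R.
Proof.
move=> Bba.
have wk := word_of_mx_bounded Bba; have jw j := mem_word_of_mx j Bba.
have [s sP] : exists s : {perm 'I_k}, forall j j',
    (s j < s j') = (index (j : nat) (word_of_mx B) < index (j' : nat) (word_of_mx B)).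
  apply: rank_perm => j j' /(congr1 (nth 0 (word_of_mx B))).
  by rewrite !nth_index //; apply: val_inj.
exists s; rewrite (is_ba_word_mx Bba) mulmx_perm_word_mx ?size_word_of_mx //.
apply: pword0_oba.
have sVj j (jk : j < k) : j = relabel s (s^-1 (Ordinal jk))%g by rewrite relabel_val permKV.
split.
- by rewrite size_map size_word_of_mx.
- by move=> _ /mapP [x /wk xk ->]; rewrite -[x]/(val (Ordinal xk)) relabel_val.
- by move=> j jk; rewrite add0n (sVj j jk) map_f.
- move=> j j' jj' j'k; rewrite !add0n (sVj j' j'k) (sVj j (ltn_trans jj' j'k)).
  by rewrite !(index_map (@relabel_inj _ s)) -sP !permKV.
Qed.

Lemma piM_oba m k (B : 'M[nat]_(m, k)) : is_ba B -> is_oba (B *m perm_mx (piM B))%R.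
Proof.
move=> Bba; rewrite /piM; case: pickP => // none.
by have [s] := is_ba_oba_perm Bba; rewrite none.
Qed.

Local Open Scope ring_scope.

Theorem theorem5p2 :
  forall k m r : nat, exists n : nat,
    forall c : 'M[nat]_(n, k) -> 'I_r,
      exists R : 'M[nat]_(n, m), is_oba R /\
        exists chat : {perm 'I_k} -> 'I_r,
          forall B : 'M[nat]_(m, k), is_ba B -> c (R *m B) = chat (piM B).
Proof.
move=> k m r; have [n Hn] := graham_rothschild_all k 0 m {ffun {perm 'I_k} -> 'I_r}.
exists n => c.
pose chi w : {ffun {perm 'I_k} -> 'I_r} := [ffun s => c (word_mx n k w *m perm_mx s)].
have [F pF HF] := Hn chi; have [sF lF _ _] := pF.
exists (word_mx n m F); split; first exact: pword0_oba.
(* Some ordered word of shape [m, k] exists as soon as some [B] is given. *)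
pose w0 := epsilon (inhabits [::]) (pword 0 m k).
exists (fun s => chi (wcomp 0 F w0) s^-1%g) => B Bba.
have oba_piM := piM_oba Bba.
have pB := is_oba_pword oba_piM.
have pw0 : pword 0 m k w0 := epsilon_spec (inhabits [::]) (pword 0 m k) (ex_intro _ _ pB).
have EB : B = word_mx m k (word_of_mx (B *m perm_mx (piM B))) *m perm_mx (piM B)^-1%g.
  rewrite -is_ba_word_mx; last by case/andP: oba_piM.
  by rewrite -mulmxA -perm_mxM mulgV perm_mx1 mulmx1.
rewrite {1}EB mulmxA mulmx_word_mx //.
by have := congr1 (fun f : {ffun _ -> 'I_r} => f (piM B)^-1%g) (HF _ _ pB pw0); rewrite !ffunE.
Qed.
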